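(* Let $G=(V,E)$ be a directed graph of maximum height $\lambda(G)$ (in the setting described in the context, i.e. a rooted stream-network tree), let $b\ge 2$ be an integer, and let $S=\{G_0,\dots,G_{|S|}\}$ denote the set of reduced graphs obtained by applying the Log Reduced Graphs (LRG) algorithm with base $b$ to $G$. Then $|S|\le \log_b(\lambda(G))$.
   Context: A stream network is modelled as a directed graph $G=(V,E)$ with one vertex per stream reach and an edge per stream junction; every vertex except a unique root has exactly one downstream edge, so $G$ is a tree rooted at $\mathrm{root}(G)$ (the only vertex with no downstream edge). A leaf is a vertex with no upstream edge. For $v\in V$, $\delta(v)$ is the distance of $v$ from the root (number of edges on the downstream path from $v$ to the root). The height $\lambda(G)$ is the maximal number of vertices on a path between the root and any leaf. A vertex $w$ is upstream of $v$ if $v$ lies on the downstream path from $w$ to the root. The Log Reduced Graphs algorithm with base $b\ge 2$ proceeds through reduction levels $rf=0,1,2,\dots$: at level $rf$ it forms a graph $H_{rf}$ whose vertex set is $\{v\in V:\ \delta(v)\equiv 0 \pmod{b^{rf}}\}$, with an edge $(u,v)$ whenever $u$ is upstream of $v$ and $\delta(u)=\delta(v)+b^{rf}$ (each vertex $u$ of $H_{rf}$ also receives the union of the catchment polygons of the vertices upstream of $u$ lying less than $b^{rf}$ levels above it). Level $0$ gives $G$ itself. The recursion stops at the first level whose graph contains only the root. $S$ is the collection of graphs produced. *)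

From Stdlib Require Import Reals.
From mathcomp Require Import all_boot.

Set Implicit Arguments.
Unset Strict Implicit.
Unset Printing Implicit Defensive.

Section StreamTree.
Variable V : finType.
(* [down v] = Some w iff (v, w) is the (unique) downstream edge of v. *)
Variable down : V -> option V.
Variable root : V.

Definition dstep (v : V) : V := odflt v (down v).

Definition stream_tree : Prop :=
  down root = None /\
  (forall v, v != root -> down v != None) /\
  (forall v, exists n, iter n dstep v = root).

(* delta(v): number of edges on the downstream path from v to the root
   (in a tree on V this is < #|V|). *)
Definition depth (v : V) : nat :=
  find (fun n => iter n dstep v == root) (iota 0 #|V|).

Definition upstream (w v : V) : Prop := exists n, iter n dstep w = v.

Definition leaf (v : V) : bool := [forall u, down u != Some v].

(* lambda(G): maximal number of vertices on a path between root and a leaf *)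
Definition height : nat := \max_(v | leaf v) (depth v).+1.

Definition lrg_vertices (b rf : nat) : {set V} :=
  [set v | b ^ rf %| depth v].

Definition lrg_edge (b rf : nat) (u v : V) : Prop :=
  u \in lrg_vertices b rf /\ v \in lrg_vertices b rf /\
  upstream u v /\ depth u = depth v + b ^ rf.

Definition lrg_stop_level (b r : nat) : Prop :=
  lrg_vertices b r = [set root] /\
  (forall r', r' < r -> lrg_vertices b r' <> [set root]).

(* S: the reduced graphs produced before stopping, G_0 = H_0 = G, ...,
   G_{r-1} = H_{r-1}. *)
Definition lrg_S (b r : nat) : seq ({set V} * (V -> V -> Prop)) :=
  [seq (lrg_vertices b rf, lrg_edge b rf) | rf <- iota 0 r].

End StreamTree.

Definition logb (b x : R) : R := Rdiv (ln x) (ln b).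

(** If the recursion stops at level r > 0, then level r - 1 still contains a
    vertex v other than the root, so b^(r-1) divides δ(v) > 0, whence
    b^(r-1) <= δ(v) < λ(G) because v lies downstream of some leaf.  Taking
    logarithms gives |S| - 1 = r - 1 <= log_b λ(G). *)

From Pilot Require Import Defs.
From Stdlib Require Import Reals Lra.
From mathcomp Require Import all_boot.

Set Implicit Arguments.
Unset Strict Implicit.
Unset Printing Implicit Defensive.

Section StreamTree.
Variables (V : finType) (down : V -> option V) (root : V).
Hypothesis htree : stream_tree down root.

Local Notation dstep := (dstep down).
Local Notation depth := (depth down root).
Local Notation height := (height down root).

Lemma reaches_root_within_card v : exists2 n, n < #|V| & iter n dstep v = root.
Proof.
case: htree => _ [_ /(_ v) [m reach_m]].
have v_to_root : fconnect dstep v root by rewrite -reach_m fconnect_iter.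
exists (findex dstep v root); last exact: iter_findex.
apply: leq_trans (findex_max v_to_root) _.
by rewrite -size_orbit -(card_uniqP (orbit_uniq _ _)) max_card.
Qed.

Lemma has_reach_root v : has (fun n => iter n dstep v == root) (iota 0 #|V|).
Proof.
have [n lt_n_card reach_n] := reaches_root_within_card v.
by apply/hasP; exists n; rewrite ?mem_iota ?reach_n.
Qed.

Lemma depth_lt_card v : depth v < #|V|.
Proof. by have := has_reach_root v; rewrite has_find size_iota. Qed.

Lemma iter_depth v : iter (depth v) dstep v = root.
Proof.
apply/eqP; have := nth_find 0 (has_reach_root v).
by rewrite nth_iota ?depth_lt_card.
Qed.

Lemma depth_min v k : iter k dstep v = root -> depth v <= k.
Proof.
move=> reach_k; rewrite leqNgt; apply/negP => lt_k_depth.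
have := before_find 0 lt_k_depth.
by rewrite nth_iota ?reach_k ?eqxx // (ltn_trans lt_k_depth (depth_lt_card v)).
Qed.

Lemma depth_root : depth root = 0.
Proof. by apply/eqP; rewrite -leqn0; apply: depth_min. Qed.

Lemma depth_gt0 v : (0 < depth v) = (v != root).
Proof.
case: eqVneq => [->|v_neq_root]; first by rewrite depth_root.
rewrite lt0n; apply/eqP => depth0.
by move: v_neq_root; rewrite -(iter_depth v) depth0 eqxx.
Qed.

Lemma depth_dstep w : w != root -> depth w = (depth (dstep w)).+1.
Proof.
rewrite -depth_gt0 => depth_w_gt0; apply/eqP; rewrite eqn_leq.
apply/andP; split; first by apply: depth_min; rewrite iterSr iter_depth.
rewrite -(prednK depth_w_gt0) ltnS; apply: depth_min.
by rewrite -iterSr prednK // iter_depth.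
Qed.

Lemma exists_leaf_above v : exists2 l, leaf down l & depth v <= depth l.
Proof.
have [u _ u_max] := @arg_maxnP V v xpredT depth erefl.
exists u; last exact: u_max.
apply/forallP => w; apply/negP => /eqP down_w.
have w_neq_root : w != root.
  case: htree => down_root _; apply/eqP => w_root.
  by move: down_w; rewrite w_root down_root.
have : depth w <= depth u := u_max w erefl.
by rewrite (depth_dstep w_neq_root) /Defs.dstep down_w ltnn.
Qed.

Lemma depth_lt_height v : depth v < height.
Proof.
have [l leaf_l le_v_l] := exists_leaf_above v.
apply: leq_ltn_trans le_v_l _; rewrite /Defs.height.
exact: (@leq_bigmax_cond _ (leaf down) (fun u => (depth u).+1) l leaf_l).
Qed.

Lemma root_in_lrg_vertices b rf : root \in lrg_vertices down root b rf.
Proof. by rewrite inE depth_root dvdn0. Qed.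

Lemma lrg_nontrivial_expn_lt_height b rf :
  lrg_vertices down root b rf <> [set root] -> b ^ rf < height.
Proof.
move=> nontrivial.
have [v /andP [v_in v_neq_root] | no_other] :=
  pickP [pred v | (v \in lrg_vertices down root b rf) && (v != root)].
  rewrite inE in v_in; apply: leq_ltn_trans _ (depth_lt_height v).
  by apply: dvdn_leq; rewrite ?depth_gt0.
case: nontrivial; apply/setP => x; rewrite in_set1.
case: eqVneq => [->|x_neq_root]; first exact: root_in_lrg_vertices.
by have := no_other x; rewrite /= x_neq_root andbT.
Qed.

Lemma lrg_stop_level_expn_le_height b r :
  lrg_stop_level down root b r -> b ^ r.-1 <= height.
Proof.
case: r => [|r] [_ below_stop]; first by have := depth_lt_height root; rewrite depth_root.
exact/ltnW/lrg_nontrivial_expn_lt_height/below_stop.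
Qed.

End StreamTree.

Lemma INR_expn b n : INR (b ^ n) = pow (INR b) n.
Proof. by elim: n => [|n IH]; rewrite ?expn0 // expnS mult_INR IH. Qed.

Lemma ln_le (x y : R) : Rlt 0 x -> Rle x y -> Rle (ln x) (ln y).
Proof.
move=> x_gt0 /Rle_lt_or_eq_dec [lt_x_y|->]; last exact: Rle_refl.
exact/Rlt_le/ln_increasing.
Qed.

Lemma INR_le_logb b n h : 1 < b -> b ^ n <= h -> Rle (INR n) (logb (INR b) (INR h)).
Proof.
move=> b_gt1 le_bn_h.
have INR_b_gt1 : Rlt 1 (INR b) by apply: (lt_INR 1); apply/ltP.
have ln_b_gt0 : Rlt 0 (ln (INR b)) by rewrite -ln_1; apply: ln_increasing; lra.
apply: (Rmult_le_reg_r _ _ _ ln_b_gt0).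
rewrite /logb /Rdiv Rmult_assoc Rinv_l ?Rmult_1_r; last lra.
rewrite -ln_pow -?INR_expn; last lra.
apply: ln_le; last exact/le_INR/leP.
by apply/lt_0_INR/ltP; rewrite expn_gt0 (ltnW b_gt1).
Qed.

Theorem lemma1 (V : finType) (down : V -> option V) (root : V) (b : nat)
  (hb : 2 <= b) (htree : stream_tree down root) (r : nat)
  (hstop : lrg_stop_level down root b r) :
  Rle (INR (size (lrg_S down root b r)).-1) (logb (INR b) (INR (height down root))).
Proof.
rewrite /lrg_S size_map size_iota.
exact: INR_le_logb hb (lrg_stop_level_expn_le_height htree hstop).
Qed.
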